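(* Suppose $n_0>0$ and consider an orbit of the system in the interior of the cube that converges as $\lambda\to+\infty$ to $P_2=(U,Q,\Omega)=(0,1,0)$. Then the limits $$C=\lim_{\lambda\to\infty}\frac{\Omega^{1/a}}{1-Q},\qquad D=\lim_{\lambda\to\infty}\frac{\Omega^{n_0/a}}{U}$$ exist and are positive and finite, and the corresponding perfect fluid solution has finite radius $R$ and total mass $M$ given by $$R^2=\frac{1}{4\pi\rho_-}\frac{C}{D},\qquad M^2=\frac{1}{4\pi\rho_-}\frac{C^3}{D}.$$ Moreover near the surface, with $\delta r=(R-r)/R$, the Newtonian potential satisfies $v(r)=-C\delta r-C\delta r^2+v_S+O(\delta r^{2+\min(1,n_0)})$.
   Context: Equation of state: $\rho=\rho(p)$ with $\rho>0$ for $p>0$, $\eta(p)=\int_0^p dp'/\rho(p')$ finite; index function $n(\eta)=\frac{\eta}{\rho}\frac{d\rho}{d\eta}$; asymptotically polytropic with $\rho(\eta)=\rho_-\eta^{n_0}(1+O(\eta^{a_0}))$ as $\eta\to0$ ($\rho_->0$, $a_0>0$). Perfect fluid: $dm/dr=4\pi r^2\rho$, $dp/dr=-m\rho/r^2$; Newtonian potential $v$ with $v=v_S-\eta$, $v_S$ the surface potential. Variables $U=u/(1+u)$, $Q=q/(1+q)$, $\Omega=\eta^a/(1+\eta^a)$ with $u=4\pi r^3\rho/m$, $q=m/(r\eta)$, $a>0$, obeying $\frac{dU}{d\lambda}=U(1-U)[(1-Q)(3-4U)-n(\Omega)Q(1-U)]$, $\frac{dQ}{d\lambda}=Q(1-Q)[(2U-1)(1-Q)+Q(1-U)]$,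 $\frac{d\Omega}{d\lambda}=-a\Omega(1-\Omega)Q(1-U)$, $d\lambda/d\ln r=(1-U)^{-1}(1-Q)^{-1}$. *)

From Stdlib Require Import Reals.
From Coquelicot Require Import Coquelicot.
Open Scope R_scope.

(* The equation of state is encoded by the density as a function of the
   enthalpy-like variable eta.  *)

Definition index_fun (rho : R -> R) (eta : R) : R :=
  eta * Derive rho eta / rho eta.

(* eta as a function of Omega = eta^a/(1+eta^a) *)
Definition eta_of_Om (a Om : R) : R := Rpower (Om / (1 - Om)) (1 / a).

Definition n_Om (rho : R -> R) (a Om : R) : R := index_fun rho (eta_of_Om a Om).

(* Asymptotically polytropic: rho(eta) = rho_- eta^n0 (1 + O(eta^a0)) as
   eta -> 0, with the O-term differentiable in the usual sense
   (eta * d/deta O(eta^a0) = O(eta^a0)), equivalently n(eta) = n0 + O(eta^a0). *)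
Definition asympt_polytropic (rho : R -> R) (rhom n0 a0 : R) : Prop :=
  exists K delta, 0 < delta /\
    forall eta, 0 < eta < delta ->
      Rabs (rho eta / (rhom * Rpower eta n0) - 1) <= K * Rpower eta a0 /\
      Rabs (index_fun rho eta - n0) <= K * Rpower eta a0.

(* Reconstruction of the perfect fluid solution from (U,Q,Omega):
   u = U/(1-U), q = Q/(1-Q), eta = (Omega/(1-Omega))^(1/a),
   u q = 4 pi r^2 rho / eta  gives r,  and m = q r eta. *)
Definition u_of (U : R) : R := U / (1 - U).
Definition q_of (Q : R) : R := Q / (1 - Q).

Definition radius_of (rho : R -> R) (a U Q Om : R) : R :=
  let eta := eta_of_Om a Om in
  sqrt (u_of U * q_of Q * eta / (4 * PI * rho eta)).

Definition mass_of (rho : R -> R) (a U Q Om : R) : R :=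
  q_of Q * radius_of rho a U Q Om * eta_of_Om a Om.

Definition potential_of (vS a Om : R) : R := vS - eta_of_Om a Om.

From Stdlib Require Import Reals Lra.
From Coquelicot Require Import Coquelicot.
Open Scope R_scope.

(* Along the orbit the radius r, the mass m and eta = v_S - v satisfy
   r' = r (1-U)(1-Q), m' = m U (1-Q) and eta' = - eta Q (1-U) in lambda.  Near P2
   the decay of 1 - Q beats the growth rates of r and m, so both increase to finite
   limits R and M: the star has a surface.  There eta -> 0, so rho ~ rho_- eta^n0,
   and the identities q = m/(r eta), u = 4 pi r^3 rho/m give C = M/R and
   D = M/(4 pi R^3 rho_-).  For the potential, eta is compared with the depth
   M/r - M/R = (M/R)(dr + dr^2 + dr^3/(1-dr)) of the point-mass potential: from
   U = O(eta^n0) = O(dr^n0) one integrates M - m = O(dr^(1+n0)), and once more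
   eta - (M/r - M/R) = O(dr^(2+n0)). *)

Ltac rewrite_Derive H :=
  match type of H with is_derive ?f ?x ?v =>
    let E := fresh in
    assert (E : Derive (fun y => f y) x = v) by exact (is_derive_unique f x v H);
    cbv beta in E; rewrite E; clear E end.

Lemma is_lim_mult' (f g : R -> R) x (lf lg : R) :
  is_lim f x lf -> is_lim g x lg -> is_lim (fun y => f y * g y) x (lf * lg).
Proof. intros Hf Hg. exact (is_lim_mult f g x lf lg Hf Hg I). Qed.

Lemma is_lim_div' (f g : R -> R) x (lf lg : R) :
  lg <> 0 -> is_lim f x lf -> is_lim g x lg -> is_lim (fun y => f y / g y) x (lf / lg).
Proof.
  intros Hlg Hf Hg. apply (is_lim_div f g x lf lg Hf Hg); [|exact I].
  intro H; apply Hlg; now injection H.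
Qed.

Lemma eventually_lt_of_lim (f : R -> R) (l c : R) :
  is_lim f p_infty l -> l < c -> exists L, forall x, L <= x -> f x < c.
Proof.
  intros Hf Hlc. destruct (Hf (fun y => y < c) (open_lt c l Hlc)) as [M HM].
  exists (M + 1). intros x Hx. apply HM. lra.
Qed.

Lemma eventually_gt_of_lim (f : R -> R) (l c : R) :
  is_lim f p_infty l -> c < l -> exists L, forall x, L <= x -> c < f x.
Proof.
  intros Hf Hlc. destruct (Hf (fun y => c < y) (open_gt c l Hlc)) as [M HM].
  exists (M + 1). intros x Hx. apply HM. lra.
Qed.

Lemma is_lim_Rpower (f : R -> R) (c p : R) :
  0 < c -> is_lim f p_infty c -> is_lim (fun x => Rpower (f x) p) p_infty (Rpower c p).
Proof.
  intros Hc Hf. apply (is_lim_comp_continuous f (fun y => Rpower y p) p_infty c Hf).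
  apply (ex_derive_continuous (K := R_AbsRing) (V := R_NormedModule)).
  exists (p * Rpower c (p - 1)). apply is_derive_Reals, derivable_pt_lim_power, Hc.
Qed.

Lemma is_lim_Rpower_0 (f : R -> R) (p : R) :
  0 < p -> (forall x, 0 < f x) -> is_lim f p_infty 0 ->
  is_lim (fun x => Rpower (f x) p) p_infty 0.
Proof.
  intros Hp Hpos Hf. apply is_lim_spec. intros eps.
  assert (He : 0 < Rpower eps (/ p)) by apply exp_pos.
  destruct (proj2 (is_lim_spec f p_infty 0) Hf (mkposreal _ He)) as [M HM].
  exists M. intros x Hx. specialize (HM x Hx). simpl in HM |- *.
  specialize (Hpos x). rewrite Rminus_0_r, Rabs_pos_eq in * by (try apply Rlt_le, exp_pos; lra).
  rewrite <- (Rpower_1 eps) by apply cond_pos.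
  rewrite <- (Rinv_l p) by lra. rewrite <- Rpower_mult.
  apply Rlt_Rpower_l; lra.
Qed.

Lemma is_derive_continuity_pt (f : R -> R) x d : is_derive f x d -> continuity_pt f x.
Proof. intro H. exact (derivable_continuous_pt f x (exist _ d (proj1 (is_derive_Reals f x d) H))). Qed.

Lemma nondecr_of_deriv_nonneg (f df : R -> R) L :
  (forall x, L <= x -> is_derive f x (df x)) -> (forall x, L <= x -> 0 <= df x) ->
  forall x y, L <= x -> x <= y -> f x <= f y.
Proof.
  intros Hd Hp x y Hx Hxy.
  destruct (MVT_gen f x y df) as [c [Hc Heq]];
    rewrite ?Rmin_left, ?Rmax_right in * by lra.
  - intros z Hz. apply Hd. lra.
  - intros z Hz. apply (is_derive_continuity_pt f z (df z)), Hd. lra.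
  - assert (0 <= df c) by (apply Hp; lra). nra.
Qed.

Lemma nonincr_of_deriv_nonpos (f df : R -> R) L :
  (forall x, L <= x -> is_derive f x (df x)) -> (forall x, L <= x -> df x <= 0) ->
  forall x y, L <= x -> x <= y -> f y <= f x.
Proof.
  intros Hd Hp x y Hx Hxy.
  enough (- f x <= - f y) by lra.
  apply (nondecr_of_deriv_nonneg (fun z => - f z) (fun z => - df z) L); auto.
  - intros z Hz. exact (is_derive_opp f z (df z) (Hd z Hz)).
  - intros z Hz. specialize (Hp z Hz). lra.
Qed.

Lemma le_lim_of_nondecr (f : R -> R) L (l : R) :
  (forall x y, L <= x -> x <= y -> f x <= f y) -> is_lim f p_infty l ->
  forall x, L <= x -> f x <= l.
Proof.
  intros Hf Hl x Hx. change (Rbar_le (f x) l).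
  apply (is_lim_le_loc (fun _ => f x) f p_infty); [|apply is_lim_const|exact Hl].
  exists x. intros y Hy. apply Hf; lra.
Qed.

Lemma le_lim_of_deriv_nonneg (f df : R -> R) L (l : R) :
  (forall x, L <= x -> is_derive f x (df x)) -> (forall x, L <= x -> 0 <= df x) ->
  is_lim f p_infty l -> forall x, L <= x -> f x <= l.
Proof.
  intros Hd Hp. apply le_lim_of_nondecr. exact (nondecr_of_deriv_nonneg f df L Hd Hp).
Qed.

Lemma lim_le_of_deriv_nonpos (f df : R -> R) L (l : R) :
  (forall x, L <= x -> is_derive f x (df x)) -> (forall x, L <= x -> df x <= 0) ->
  is_lim f p_infty l -> forall x, L <= x -> l <= f x.
Proof.
  intros Hd Hp Hl x Hx.
  enough (- f x <= - l) by lra.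
  apply (le_lim_of_deriv_nonneg (fun z => - f z) (fun z => - df z) L); auto.
  - intros z Hz. exact (is_derive_opp f z (df z) (Hd z Hz)).
  - intros z Hz. specialize (Hp z Hz). lra.
  - exact (is_lim_opp f p_infty l Hl).
Qed.

Lemma ex_lim_of_nondecr_bounded (f : R -> R) L B :
  (forall x y, L <= x -> x <= y -> f x <= f y) -> (forall x, L <= x -> f x <= B) ->
  exists l : R, is_lim f p_infty l.
Proof.
  intros Hm Hb.
  set (E := fun y => exists x, L <= x /\ y = f x).
  destruct (completeness E) as [l [Hub Hlub]].
  - exists B. intros y [x [Hx ->]]. auto.
  - exists (f L), L. split; [lra|auto].
  exists l. apply is_lim_spec. intros eps.
  destruct (Classical_Prop.classic (exists x, L <= x /\ l - eps < f x)) as [[x0 [Hx0 Hf0]]|Hn].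
  - exists x0. intros x Hx. simpl.
    assert (f x0 <= f x) by (apply Hm; lra).
    assert (f x <= l) by (apply Hub; exists x; split; [lra|auto]).
    assert (0 < eps) by apply cond_pos.
    apply Rabs_def1; lra.
  - exfalso. assert (0 < eps) by apply cond_pos.
    enough (l <= l - eps) by lra.
    apply Hlub. intros y [x [Hx ->]].
    apply Rnot_lt_le. intro Hlt. apply Hn. now exists x.
Qed.

Lemma Rle_Rpower_le_1 (x p q : R) : 0 < x <= 1 -> p <= q -> Rpower x q <= Rpower x p.
Proof.
  intros Hx Hpq. unfold Rpower.
  assert (Hln : ln x <= 0).
  { destruct (Req_dec x 1) as [->|]; [rewrite ln_1; lra|].
    rewrite <- ln_1. left. apply ln_increasing; lra. }
  assert (q * ln x <= p * ln x) by nra.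
  destruct (Req_dec (q * ln x) (p * ln x)) as [->|]; [lra|].
  left. apply exp_increasing. lra.
Qed.

Lemma is_derive_Rpower_comp (g : R -> R) x dg p :
  0 < g x -> is_derive g x dg ->
  is_derive (fun y => Rpower (g y) p) x (p * Rpower (g x) (p - 1) * dg).
Proof.
  intros Hp Hg.
  assert (H1 : is_derive (fun z => Rpower z p) (g x) (p * Rpower (g x) (p - 1)))
    by apply is_derive_Reals, derivable_pt_lim_power, Hp.
  assert (H := is_derive_comp (fun z => Rpower z p) g x _ _ H1 Hg).
  unfold scal in H; simpl in H; unfold mult in H; simpl in H.
  now rewrite Rmult_comm.
Qed.

Lemma Q_decay_rate_ge (U Q : R) : 0 < U < 1/10 -> 9/10 < Q < 1 ->
  1 <= 2 * Q * ((2 * U - 1) * (1 - Q) + Q * (1 - U)).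
Proof.
  intros HU HQ.
  assert ((2 * U - 1) * (1 - Q) + Q * (1 - U) >= 71/100) by nra.
  nra.
Qed.

(* ln f + 2 (1 - Q) is a Lyapunov function: near Q = 1 the decay of 1 - Q
   outweighs the growth rate g <= 1 - Q of ln f. *)
Lemma ex_lim_of_growth_le_1_sub_Q (U Q f g : R -> R) L :
  (forall x, 0 < U x < 1 /\ 0 < Q x < 1) ->
  (forall x, is_derive Q x
     (Q x * (1 - Q x) * ((2 * U x - 1) * (1 - Q x) + Q x * (1 - U x)))) ->
  (forall x, 0 < f x) -> (forall x, is_derive f x (f x * g x)) ->
  (forall x, 0 <= g x <= 1 - Q x) ->
  (forall x, L <= x -> U x < 1/10 /\ 9/10 < Q x) ->
  exists l : R, is_lim f p_infty l.
Proof.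
  intros HUQ DQ fpos Df Hg HL.
  set (V := fun x => ln (f x) + 2 * (1 - Q x)).
  assert (V_nonincr : forall x y, L <= x -> x <= y -> V y <= V x).
  { apply (nonincr_of_deriv_nonpos V
      (fun x => g x - 2 * (Q x * (1 - Q x) * ((2 * U x - 1) * (1 - Q x) + Q x * (1 - U x))))).
    - intros x _. assert (Dfx := Df x). assert (DQx := DQ x). specialize (fpos x).
      unfold V. auto_derive.
      + repeat split; try (eexists; eassumption). lra.
      + rewrite_Derive Dfx. rewrite_Derive DQx. field. lra.
    - intros x Hx. destruct (HL x Hx), (HUQ x). specialize (Hg x).
      assert (Hrate := Q_decay_rate_ge (U x) (Q x) ltac:(lra) ltac:(lra)).
      nra. }
  apply (ex_lim_of_nondecr_bounded f L (exp (V L))).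
  - apply (nondecr_of_deriv_nonneg f (fun x => f x * g x) L); [intros; apply Df|].
    intros x _. specialize (fpos x). specialize (Hg x). nra.
  - intros x Hx. rewrite <- (exp_ln (f x)) by apply fpos.
    assert (ln (f x) <= V L) by (specialize (V_nonincr L x (Rle_refl L) Hx);
                                 destruct (HUQ x); unfold V in *; lra).
    destruct (Req_dec (ln (f x)) (V L)) as [->|]; [lra|].
    left. apply exp_increasing. lra.
Qed.

Lemma expansion_remainder_le (c d n0 K F : R) :
  0 < c -> 0 < d < 1/2 -> 0 < n0 -> 0 <= K -> F <= 0 -> - F <= K * Rpower d (2 + n0) ->
  Rabs (F + c * (d ^ 3 / (1 - d))) <= (K + 2 * c) * Rpower d (2 + Rmin 1 n0).
Proof.
  intros Hc Hd Hn0 HK HF HFK.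
  assert (Hcube : d ^ 3 / (1 - d) <= 2 * Rpower d 3).
  { replace 3 with (INR 3) by (simpl; ring). rewrite Rpower_pow by lra.
    apply (Rmult_le_reg_r (1 - d)); [lra|]. field_simplify; [|lra]. nra. }
  assert (0 <= d ^ 3 / (1 - d)) by (apply Rdiv_le_0_compat; [apply pow_le|]; lra).
  assert (Rpower d (2 + n0) <= Rpower d (2 + Rmin 1 n0))
    by (apply Rle_Rpower_le_1; [lra|]; pose proof (Rmin_r 1 n0); lra).
  assert (Rpower d 3 <= Rpower d (2 + Rmin 1 n0))
    by (apply Rle_Rpower_le_1; [lra|]; pose proof (Rmin_l 1 n0); lra).
  assert (0 < Rpower d (2 + Rmin 1 n0)) by apply exp_pos.
  apply Rabs_le. split; nra.
Qed.

(* The structure equations dm/dr = 4 pi r^2 rho, d eta/dr = - m/r^2 written in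
   lambda, where d ln r / d lambda = (1-U)(1-Q). *)
Section Surface.

Variables (U Q eta r m : R -> R) (Rad M : R).
Hypothesis UQ_interior : forall x, 0 < U x < 1 /\ 0 < Q x < 1.
Hypothesis r_pos : forall x, 0 < r x.
Hypothesis m_pos : forall x, 0 < m x.
Hypothesis eta_pos : forall x, 0 < eta x.
Hypothesis Deta : forall x, is_derive eta x (- eta x * Q x * (1 - U x)).
Hypothesis Dr : forall x, is_derive r x (r x * (1 - U x) * (1 - Q x)).
Hypothesis Dm : forall x, is_derive m x (m x * U x * (1 - Q x)).
Hypothesis q_eq : forall x, q_of (Q x) = m x / (r x * eta x).
Hypothesis r_lim : is_lim r p_infty Rad.
Hypothesis m_lim : is_lim m p_infty M.
Hypothesis eta_lim : is_lim eta p_infty 0.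

Lemma r_nondecr x y : x <= y -> r x <= r y.
Proof.
  apply (nondecr_of_deriv_nonneg r _ x (fun z _ => Dr z)); [|lra].
  intros z _. destruct (UQ_interior z) as [[? ?] [? ?]]. pose proof (r_pos z).
  apply Rmult_le_pos; [apply Rmult_le_pos|]; lra.
Qed.

Lemma m_nondecr x y : x <= y -> m x <= m y.
Proof.
  apply (nondecr_of_deriv_nonneg m _ x (fun z _ => Dm z)); [|lra].
  intros z _. destruct (UQ_interior z) as [[? ?] [? ?]]. pose proof (m_pos z).
  apply Rmult_le_pos; [apply Rmult_le_pos|]; lra.
Qed.

Lemma r_lt_Rad x : r x < Rad.
Proof.
  assert (r x < r (x + 1)).
  { apply (incr_function r (x - 1) (x + 2) _ (fun z _ _ => Dr z)); simpl; try lra.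
    intros z _ _. destruct (UQ_interior z) as [[? ?] [? ?]]. pose proof (r_pos z).
    apply Rmult_gt_0_compat; [apply Rmult_gt_0_compat|]; lra. }
  assert (r (x + 1) <= Rad) by (apply (le_lim_of_nondecr r x); auto using r_nondecr; lra).
  lra.
Qed.

Lemma m_le_M x : m x <= M.
Proof. apply (le_lim_of_nondecr m x); auto using m_nondecr; lra. Qed.

Lemma Rad_pos : 0 < Rad.
Proof. specialize (r_lt_Rad 0). pose proof (r_pos 0). lra. Qed.

Lemma M_pos : 0 < M.
Proof. specialize (m_le_M 0). pose proof (m_pos 0). lra. Qed.

Definition depth x := (Rad - r x) / Rad.

Lemma depth_pos x : 0 < depth x.
Proof. assert (H := r_lt_Rad x). assert (H' := Rad_pos). apply Rdiv_lt_0_compat; lra. Qed.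

Lemma is_lim_depth : is_lim depth p_infty 0.
Proof.
  replace 0 with ((Rad - Rad) / Rad) by (assert (H := Rad_pos); field; lra).
  apply is_lim_div'; [apply Rgt_not_eq, Rad_pos| |apply is_lim_const].
  apply is_lim_minus'; [apply is_lim_const|exact r_lim].
Qed.

Lemma is_derive_depth_Rpower p x :
  is_derive (fun x => Rpower (depth x) p) x
    (- p * Rpower (depth x) (p - 1) * (r x * (1 - U x) * (1 - Q x) / Rad)).
Proof.
  assert (H := Rad_pos).
  assert (Ddepth : is_derive depth x (- (r x * (1 - U x) * (1 - Q x)) / Rad)).
  { assert (Drx := Dr x). unfold depth. auto_derive.
    - eexists; eassumption.
    - rewrite_Derive Drx. field. lra. }
  replace (- p * _ * _) with (p * Rpower (depth x) (p - 1) * (- (r x * (1 - U x) * (1 - Q x)) / Rad))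
    by (field; lra).
  exact (is_derive_Rpower_comp depth x _ p (depth_pos x) Ddepth).
Qed.

Lemma eta_eq x : eta x = m x * (1 - Q x) / (r x * Q x).
Proof.
  destruct (UQ_interior x) as [_ [? ?]]. pose proof (r_pos x). pose proof (eta_pos x).
  pose proof (m_pos x).
  transitivity (m x / (r x * q_of (Q x))); [rewrite q_eq; field; lra|].
  unfold q_of. field. lra.
Qed.

(* It increases because m <= M and tends to 0, hence is <= 0; comparison with
   powers of [depth] then shows that it vanishes to order 2 + n0. *)
Definition kepler_defect x := eta x - (M / r x - M / Rad).

Lemma is_derive_kepler_defect x :
  is_derive kepler_defect x ((1 - U x) * (1 - Q x) * (M - m x) / r x).
Proof.
  assert (Detax := Deta x). assert (Drx := Dr x). pose proof (r_pos x).
  destruct (UQ_interior x) as [_ [? ?]].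
  unfold kepler_defect. auto_derive.
  - repeat split; try (eexists; eassumption). lra.
  - rewrite_Derive Detax. rewrite_Derive Drx. rewrite (eta_eq x). field. lra.
Qed.

Lemma is_lim_kepler_defect : is_lim kepler_defect p_infty 0.
Proof.
  replace 0 with (0 - (M / Rad - M / Rad)) by ring.
  apply is_lim_minus'; [exact eta_lim|].
  apply is_lim_minus'; [|apply is_lim_const].
  apply is_lim_div'; [apply Rgt_not_eq, Rad_pos|apply is_lim_const|exact r_lim].
Qed.

Lemma kepler_defect_le_0 x : kepler_defect x <= 0.
Proof.
  assert (H := Rad_pos).
  apply (le_lim_of_deriv_nonneg kepler_defect _ x 0 (fun z _ => is_derive_kepler_defect z));
    [ | | lra].
  - intros z _. destruct (UQ_interior z) as [[? ?] [? ?]].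
    pose proof (m_le_M z). pose proof (r_pos z).
    apply Rdiv_le_0_compat; [|lra].
    apply Rmult_le_pos; [apply Rmult_le_pos|]; lra.
  - exact is_lim_kepler_defect.
Qed.

Lemma eta_le_depth x0 x : x0 <= x -> eta x <= M / r x0 * depth x.
Proof.
  intro Hx. assert (HR := Rad_pos). assert (HM := M_pos).
  assert (Hr0 := r_pos x0). assert (Hr := r_pos x). assert (Hrx := r_nondecr x0 x Hx).
  assert (Hlt := r_lt_Rad x). assert (Hd := kepler_defect_le_0 x). unfold kepler_defect in Hd.
  assert (E : M / r x - M / Rad = M / r x * depth x) by (unfold depth; field; lra).
  assert (M / r x <= M / r x0) by (apply Rmult_le_compat_l; [lra|apply Rinv_le_contravar; lra]).
  assert (0 <= depth x) by (left; apply depth_pos).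
  nra.
Qed.

Lemma is_lim_depth_Rpower p : 0 < p -> is_lim (fun x => Rpower (depth x) p) p_infty 0.
Proof. intro Hp. exact (is_lim_Rpower_0 depth p Hp depth_pos is_lim_depth). Qed.

Lemma mass_deficit_le (n0 K1 B : R) : 0 < n0 -> 0 <= K1 ->
  (forall x, B <= x -> U x <= K1 * Rpower (depth x) n0 /\ U x <= 1/2) ->
  exists K, 0 <= K /\ forall x, B <= x -> M - m x <= K * Rpower (depth x) (1 + n0).
Proof.
  intros Hn0 HK1 HUB. assert (HR := Rad_pos). assert (HM := M_pos). pose proof (r_pos B).
  set (K := 2 * M * K1 * Rad / ((1 + n0) * r B)).
  assert (HK : 0 <= K).
  { apply Rdiv_le_0_compat; [|apply Rmult_lt_0_compat; lra].
    apply Rmult_le_pos; [|lra]. apply Rmult_le_pos; lra. }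
  exists K. split; [exact HK|]. intros x Hx.
  enough (M <= m x + K * Rpower (depth x) (1 + n0)) by lra.
  apply (lim_le_of_deriv_nonpos (fun x => m x + K * Rpower (depth x) (1 + n0))
    (fun x => m x * U x * (1 - Q x) + K * (- (1 + n0) * Rpower (depth x) (1 + n0 - 1)
                                   * (r x * (1 - U x) * (1 - Q x) / Rad))) B); auto.
  - intros z _.
    exact (is_derive_plus _ _ z _ _ (Dm z) (is_derive_scal _ z K _ (is_derive_depth_Rpower (1 + n0) z))).
  - intros z Hz. replace (1 + n0 - 1) with n0 by ring.
    destruct (HUB z Hz) as [HUz HU2]. destruct (UQ_interior z) as [[? ?] [? ?]].
    pose proof (m_le_M z). pose proof (m_pos z). pose proof (r_nondecr B z Hz).
    set (P := Rpower (depth z) n0) in *. assert (0 < P) by apply exp_pos.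
    assert (E : K * (- (1 + n0) * P * (r z * (1 - U z) * (1 - Q z) / Rad))
                = - (2 * M * K1 * P * (r z / r B) * (1 - U z) * (1 - Q z)))
      by (unfold K; field; repeat split; lra).
    rewrite E.
    assert (1 <= r z / r B) by (apply (Rmult_le_reg_r (r B)); [lra|]; field_simplify; lra).
    assert (m z * U z <= M * (K1 * P)) by (apply Rmult_le_compat; lra).
    assert (0 <= M * K1 * P) by (apply Rmult_le_pos; [apply Rmult_le_pos|]; lra).
    assert (M * (K1 * P) <= 2 * M * K1 * P * (r z / r B) * (1 - U z)).
    { assert (2 * (r z / r B) * (1 - U z) >= 1) by nra. nra. }
    nra.
  - replace M with (M + K * 0) at 1 by ring.
    apply is_lim_plus'; [exact m_lim|].
    apply is_lim_mult'; [apply is_lim_const|apply is_lim_depth_Rpower; lra].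
Qed.

Lemma opp_kepler_defect_le (n0 K B : R) : 0 < n0 -> 0 <= K ->
  (forall x, B <= x -> M - m x <= K * Rpower (depth x) (1 + n0)) ->
  exists K', 0 <= K' /\ forall x, B <= x -> - kepler_defect x <= K' * Rpower (depth x) (2 + n0).
Proof.
  intros Hn0 HK Hdef. assert (HR := Rad_pos). pose proof (r_pos B).
  set (K' := K * Rad / ((2 + n0) * r B ^ 2)).
  assert (HK' : 0 <= K').
  { apply Rdiv_le_0_compat; [apply Rmult_le_pos; lra|].
    apply Rmult_lt_0_compat; [lra|apply pow_lt; lra]. }
  exists K'. split; [exact HK'|]. intros x Hx.
  enough (0 <= kepler_defect x + K' * Rpower (depth x) (2 + n0)) by lra.
  apply (lim_le_of_deriv_nonpos (fun x => kepler_defect x + K' * Rpower (depth x) (2 + n0))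
    (fun x => (1 - U x) * (1 - Q x) * (M - m x) / r x
              + K' * (- (2 + n0) * Rpower (depth x) (2 + n0 - 1)
                      * (r x * (1 - U x) * (1 - Q x) / Rad))) B); auto.
  - intros z _.
    exact (is_derive_plus _ _ z _ _ (is_derive_kepler_defect z)
             (is_derive_scal _ z K' _ (is_derive_depth_Rpower (2 + n0) z))).
  - intros z Hz. replace (2 + n0 - 1) with (1 + n0) by ring.
    destruct (UQ_interior z) as [[? ?] [? ?]].
    pose proof (Hdef z Hz). pose proof (r_pos z). pose proof (r_nondecr B z Hz).
    set (P := Rpower (depth z) (1 + n0)) in *. assert (0 < P) by apply exp_pos.
    assert (E : (1 - U z) * (1 - Q z) * (M - m z) / r z
                + K' * (- (2 + n0) * P * (r z * (1 - U z) * (1 - Q z) / Rad))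
                = (1 - U z) * (1 - Q z) / r z * ((M - m z) - K * P * (r z / r B) ^ 2))
      by (unfold K'; field; repeat split; lra).
    rewrite E.
    assert (1 <= (r z / r B) ^ 2).
    { assert (1 <= r z / r B) by (apply (Rmult_le_reg_r (r B)); [lra|]; field_simplify; lra).
      nra. }
    assert (0 <= K * P) by (apply Rmult_le_pos; lra).
    assert (0 < (1 - U z) * (1 - Q z) / r z)
      by (apply Rdiv_lt_0_compat; [apply Rmult_lt_0_compat|]; lra).
    assert (M - m z - K * P * (r z / r B) ^ 2 <= 0) by nra.
    nra.
  - replace 0 with (0 + K' * 0) at 1 by ring.
    apply is_lim_plus'.
    + exact is_lim_kepler_defect.
    + apply is_lim_mult'; [apply is_lim_const|apply is_lim_depth_Rpower; lra].
Qed.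

Lemma eta_expansion_eq x :
  eta x - M / Rad * depth x - M / Rad * depth x ^ 2
  = kepler_defect x + M / Rad * (depth x ^ 3 / (1 - depth x)).
Proof.
  assert (HR := Rad_pos). pose proof (r_pos x).
  unfold kepler_defect, depth. field. repeat split; lra.
Qed.

Lemma eta_expansion_le (n0 K0 L0 : R) : 0 < n0 ->
  (forall x, L0 <= x -> U x <= K0 * Rpower (eta x) n0) -> is_lim U p_infty 0 ->
  exists K lam0, forall x, lam0 <= x ->
    Rabs (eta x - M / Rad * depth x - M / Rad * depth x ^ 2)
      <= K * Rpower (depth x) (2 + Rmin 1 n0).
Proof.
  intros Hn0 HUeta HUlim. assert (HR := Rad_pos). assert (HM := M_pos).
  assert (HK0 : 0 <= K0).
  { pose proof (HUeta L0 (Rle_refl _)). destruct (UQ_interior L0) as [[? ?] _].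
    assert (0 < Rpower (eta L0) n0) by apply exp_pos. nra. }
  destruct (eventually_lt_of_lim U 0 (1/2) HUlim) as [B1 HB1]; [lra|].
  set (B := Rmax L0 B1). pose proof (r_pos B).
  assert (HB : L0 <= B /\ B1 <= B) by (split; [apply Rmax_l|apply Rmax_r]).
  set (K1 := K0 * Rpower (M / r B) n0).
  assert (HUdepth : forall x, B <= x -> U x <= K1 * Rpower (depth x) n0 /\ U x <= 1/2).
  { intros x Hx.
    split; [|left; apply HB1; lra].
    eapply Rle_trans; [apply HUeta; lra|].
    unfold K1. rewrite Rmult_assoc, Rpower_mult_distr;
      [|apply Rdiv_lt_0_compat; lra|apply depth_pos].
    apply Rmult_le_compat_l; [exact HK0|].
    apply Rle_Rpower_l; [lra|]. split; [apply eta_pos|]. apply eta_le_depth. exact Hx. }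
  assert (HK1 : 0 <= K1) by (apply Rmult_le_pos; [exact HK0|left; apply exp_pos]).
  destruct (mass_deficit_le n0 K1 B Hn0 HK1 HUdepth) as [K [HK Hdef]].
  destruct (opp_kepler_defect_le n0 K B Hn0 HK Hdef) as [K' [HK' HF]].
  destruct (eventually_lt_of_lim depth 0 (1/2) is_lim_depth) as [B2 HB2]; [lra|].
  exists (K' + 2 * (M / Rad)), (Rmax B B2). intros x Hx.
  pose proof (Rmax_l B B2). pose proof (Rmax_r B B2).
  rewrite eta_expansion_eq.
  apply expansion_remainder_le; auto.
  - apply Rdiv_lt_0_compat; lra.
  - split; [apply depth_pos|apply HB2; lra].
  - apply kepler_defect_le_0.
  - apply HF. lra.
Qed.

End Surface.

Lemma is_lim_Rpower_1_sub (f : R -> R) p :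
  is_lim f p_infty 0 -> is_lim (fun x => Rpower (1 - f x) p) p_infty 1.
Proof.
  intro Hf.
  assert (H := is_lim_Rpower (fun x => 1 - f x) (1 - 0) p ltac:(lra)
                 (is_lim_minus' _ _ _ 1 0 (is_lim_const 1 p_infty) Hf)).
  unfold Rpower at 2 in H. rewrite Rminus_0_r, ln_1, Rmult_0_r, exp_0 in H. exact H.
Qed.

Lemma Rpower_Om_eq (a p Om : R) : 0 < a -> 0 < Om < 1 ->
  Rpower Om (p / a) = Rpower (1 - Om) (p / a) * Rpower (eta_of_Om a Om) p.
Proof.
  intros Ha HOm. unfold eta_of_Om.
  rewrite Rpower_mult. replace (1 / a * p) with (p / a) by (field; lra).
  rewrite Rpower_mult_distr by (try apply Rdiv_lt_0_compat; lra).
  f_equal. field. lra.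
Qed.

Lemma asympt_polytropic_is_lim (rho : R -> R) rhom n0 a0 (eta : R -> R) :
  0 < rhom -> 0 < a0 -> asympt_polytropic rho rhom n0 a0 ->
  (forall x, 0 < eta x) -> is_lim eta p_infty 0 ->
  is_lim (fun x => rho (eta x) / Rpower (eta x) n0) p_infty rhom.
Proof.
  intros Hrhom Ha0 [K [delta [Hdelta Hpoly]]] Hpos Hlim.
  destruct (eventually_lt_of_lim eta 0 delta Hlim Hdelta) as [L HL].
  set (err := fun x => rhom * K * Rpower (eta x) a0).
  assert (Hloc : Rbar_locally' p_infty (fun x =>
            rhom - err x <= rho (eta x) / Rpower (eta x) n0 <= rhom + err x)).
  { exists L. intros x Hx.
    destruct (Hpoly (eta x)) as [Hratio _]; [split; [apply Hpos|apply HL; lra]|].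
    assert (0 < Rpower (eta x) n0) by apply exp_pos.
    apply Rabs_le_between'.
    replace (rho (eta x) / Rpower (eta x) n0 - rhom)
      with (rhom * (rho (eta x) / (rhom * Rpower (eta x) n0) - 1)) by (field; lra).
    unfold err. rewrite Rabs_mult, Rabs_pos_eq, Rmult_assoc by lra.
    apply Rmult_le_compat_l; lra. }
  assert (Herr : is_lim err p_infty 0).
  { rewrite <- (Rmult_0_r (rhom * K)).
    exact (is_lim_mult' _ _ p_infty (rhom * K) 0 (is_lim_const _ _)
             (is_lim_Rpower_0 eta a0 Ha0 Hpos Hlim)). }
  assert (Hlow := is_lim_minus' _ _ p_infty rhom 0 (is_lim_const _ _) Herr).
  assert (Hup := is_lim_plus' _ _ p_infty rhom 0 (is_lim_const _ _) Herr).
  rewrite Rminus_0_r in Hlow. rewrite Rplus_0_r in Hup.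
  exact (is_lim_le_le_loc _ _ _ _ _ Hloc Hlow Hup).
Qed.

Section Orbit.

Variables (rho : R -> R) (a : R) (U Q Om : R -> R).
Hypothesis Ha : 0 < a.
Hypothesis rho_pos : forall eta, 0 < eta -> 0 < rho eta.
Hypothesis rho_derivable : forall eta, 0 < eta -> ex_derive rho eta.
Hypothesis interior : forall l, (0 < U l < 1) /\ (0 < Q l < 1) /\ (0 < Om l < 1).
Hypothesis HU : forall l, is_derive U l
  (U l * (1 - U l) * ((1 - Q l) * (3 - 4 * U l) - n_Om rho a (Om l) * Q l * (1 - U l))).
Hypothesis HQ : forall l, is_derive Q l
  (Q l * (1 - Q l) * ((2 * U l - 1) * (1 - Q l) + Q l * (1 - U l))).
Hypothesis HOm : forall l, is_derive Om l (- a * Om l * (1 - Om l) * Q l * (1 - U l)).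

Definition eta_at l := eta_of_Om a (Om l).
Definition radius_at l := radius_of rho a (U l) (Q l) (Om l).
Definition mass_at l := mass_of rho a (U l) (Q l) (Om l).
Definition radius_sq_at l := u_of (U l) * q_of (Q l) * eta_at l / (4 * PI * rho (eta_at l)).

Lemma eta_at_pos l : 0 < eta_at l.
Proof. apply exp_pos. Qed.

Lemma is_derive_eta_at l : is_derive eta_at l (- eta_at l * Q l * (1 - U l)).
Proof.
  destruct (interior l) as [[U0 U1] [[Q0 Q1] [O0 O1]]].
  unfold eta_at, eta_of_Om, Rpower. auto_derive.
  - repeat split; try (eexists; apply HOm); try lra. apply Rdiv_lt_0_compat; lra.
  - rewrite_Derive (HOm l). unfold Rminus, Rdiv. set (E := exp _). field. lra.
Qed.

Lemma radius_sq_at_pos l : 0 < radius_sq_at l.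
Proof.
  destruct (interior l) as [[U0 U1] [[Q0 Q1] [O0 O1]]].
  assert (Hrho := rho_pos _ (eta_at_pos l)). assert (Hpi := PI_RGT_0).
  assert (0 < u_of (U l)) by (apply Rdiv_lt_0_compat; lra).
  assert (0 < q_of (Q l)) by (apply Rdiv_lt_0_compat; lra).
  assert (Heta := eta_at_pos l).
  unfold radius_sq_at. apply Rdiv_lt_0_compat.
  - apply Rmult_lt_0_compat; [apply Rmult_lt_0_compat|]; assumption.
  - apply Rmult_lt_0_compat; lra.
Qed.

Lemma is_derive_radius_sq_at l :
  is_derive radius_sq_at l (radius_sq_at l * (2 * (1 - U l) * (1 - Q l))).
Proof.
  destruct (interior l) as [[U0 U1] [[Q0 Q1] [O0 O1]]].
  assert (Heta := eta_at_pos l). assert (Hrho := rho_pos _ Heta). assert (Hpi := PI_RGT_0).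
  (* The n(Omega) term of U' cancels against the derivative of rho(eta). *)
  unfold radius_sq_at, u_of, q_of. auto_derive.
  - assert (DU := HU l). assert (DQ := HQ l). assert (Deta := is_derive_eta_at l).
    repeat split; try (eexists; eassumption); try (apply rho_derivable, Heta); try lra.
    apply Rgt_not_eq, Rmult_gt_0_compat; lra.
  - rewrite_Derive (HU l). rewrite_Derive (HQ l). rewrite_Derive (is_derive_eta_at l).
    unfold n_Om, index_fun. fold (eta_at l).
    change (fun x => rho x) with rho.
    field. repeat split; lra.
Qed.

Lemma radius_at_eq l : radius_at l = sqrt (radius_sq_at l).
Proof. reflexivity. Qed.

Lemma mass_at_eq l : mass_at l = q_of (Q l) * radius_at l * eta_at l.
Proof. reflexivity. Qed.

Lemma radius_at_pos l : 0 < radius_at l.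
Proof. rewrite radius_at_eq. apply sqrt_lt_R0, radius_sq_at_pos. Qed.

Lemma mass_at_pos l : 0 < mass_at l.
Proof.
  destruct (interior l) as [_ [[Q0 Q1] _]].
  assert (0 < q_of (Q l)) by (apply Rdiv_lt_0_compat; lra).
  assert (Hr := radius_at_pos l). assert (Heta := eta_at_pos l).
  rewrite mass_at_eq. apply Rmult_lt_0_compat; [apply Rmult_lt_0_compat|]; assumption.
Qed.

Lemma is_derive_radius_at l :
  is_derive radius_at l (radius_at l * (1 - U l) * (1 - Q l)).
Proof.
  assert (Hpos := radius_sq_at_pos l).
  assert (H := is_derive_sqrt _ _ _ (is_derive_radius_sq_at l) Hpos).
  match type of H with is_derive _ _ ?d => replace (radius_at l * _ * _) with d; [exact H|] end.
  rewrite radius_at_eq. set (s := sqrt (radius_sq_at l)).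
  assert (Hs : 0 < s) by apply sqrt_lt_R0, Hpos.
  assert (E : radius_sq_at l = s * s) by (symmetry; apply sqrt_sqrt; lra).
  rewrite E. field. lra.
Qed.

Lemma is_derive_mass_at l : is_derive mass_at l (mass_at l * U l * (1 - Q l)).
Proof.
  destruct (interior l) as [[U0 U1] [[Q0 Q1] [O0 O1]]].
  assert (DQ := HQ l). assert (Dr := is_derive_radius_at l). assert (Deta := is_derive_eta_at l).
  apply (is_derive_ext (fun l => q_of (Q l) * radius_at l * eta_at l)); [reflexivity|].
  unfold q_of. auto_derive.
  - repeat split; try (eexists; eassumption). lra.
  - rewrite_Derive DQ. rewrite_Derive Dr. rewrite_Derive Deta.
    rewrite mass_at_eq. unfold q_of. field. lra.
Qed.

Lemma q_of_Q_at l : q_of (Q l) = mass_at l / (radius_at l * eta_at l).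
Proof.
  assert (Hr := radius_at_pos l). assert (Heta := eta_at_pos l).
  rewrite mass_at_eq. field. lra.
Qed.

Lemma u_of_U_at l : u_of (U l) = 4 * PI * radius_at l ^ 3 * rho (eta_at l) / mass_at l.
Proof.
  destruct (interior l) as [[U0 U1] [[Q0 Q1] _]].
  assert (Hpos := radius_sq_at_pos l). assert (Heta := eta_at_pos l).
  assert (Hrho := rho_pos _ Heta). assert (Hpi := PI_RGT_0).
  rewrite mass_at_eq, radius_at_eq.
  set (s := sqrt (radius_sq_at l)).
  assert (Hs : 0 < s) by apply sqrt_lt_R0, Hpos.
  assert (E : radius_sq_at l = s * s) by (symmetry; apply sqrt_sqrt; lra).
  assert (E' : u_of (U l) = radius_sq_at l * (4 * PI * rho (eta_at l)) / (q_of (Q l) * eta_at l)).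
  { unfold radius_sq_at, u_of, q_of. field. repeat split; lra. }
  rewrite E', E. unfold q_of. field. repeat split; lra.
Qed.
Lemma UQ_interior l : 0 < U l < 1 /\ 0 < Q l < 1.
Proof. destruct (interior l) as [? [? _]]. auto. Qed.

Hypothesis U_lim : is_lim U p_infty 0.
Hypothesis Q_lim : is_lim Q p_infty 1.
Hypothesis Om_lim : is_lim Om p_infty 0.

Lemma eventually_near_P2 : exists L, forall l, L <= l -> U l < 1/10 /\ 9/10 < Q l.
Proof.
  destruct (eventually_lt_of_lim U 0 (1/10) U_lim) as [L1 HL1]; [lra|].
  destruct (eventually_gt_of_lim Q 1 (9/10) Q_lim) as [L2 HL2]; [lra|].
  exists (Rmax L1 L2). intros l Hl. pose proof (Rmax_l L1 L2). pose proof (Rmax_r L1 L2).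
  split; [apply HL1|apply HL2]; lra.
Qed.

Lemma ex_lim_radius_at : exists Rad : R, is_lim radius_at p_infty Rad.
Proof.
  destruct eventually_near_P2 as [L HL].
  apply (ex_lim_of_growth_le_1_sub_Q U Q radius_at (fun l => (1 - U l) * (1 - Q l)) L
           UQ_interior HQ radius_at_pos); auto.
  - intro l. rewrite <- Rmult_assoc. apply is_derive_radius_at.
  - intro l. destruct (UQ_interior l) as [[? ?] [? ?]]. split; nra.
Qed.

Lemma ex_lim_mass_at : exists M : R, is_lim mass_at p_infty M.
Proof.
  destruct eventually_near_P2 as [L HL].
  apply (ex_lim_of_growth_le_1_sub_Q U Q mass_at (fun l => U l * (1 - Q l)) L
           UQ_interior HQ mass_at_pos); auto.
  - intro l. rewrite <- Rmult_assoc. apply is_derive_mass_at.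
  - intro l. destruct (UQ_interior l) as [[? ?] [? ?]]. split; nra.
Qed.

Lemma is_lim_eta_at : is_lim eta_at p_infty 0.
Proof.
  apply (is_lim_Rpower_0 (fun l => Om l / (1 - Om l))); [apply Rdiv_lt_0_compat; lra| |].
  - intro l. destruct (interior l) as [_ [_ [? ?]]]. apply Rdiv_lt_0_compat; lra.
  - replace 0 with (0 / (1 - 0)) by (field; lra).
    apply is_lim_div'; [lra|exact Om_lim|].
    apply is_lim_minus'; [apply is_lim_const|exact Om_lim].
Qed.

Lemma Om_pow_div_1_sub_Q l :
  Rpower (Om l) (1 / a) / (1 - Q l) = Rpower (1 - Om l) (1 / a) * (mass_at l / (radius_at l * Q l)).
Proof.
  destruct (interior l) as [_ [[? ?] HOml]].
  pose proof (radius_at_pos l). pose proof (eta_at_pos l). pose proof (mass_at_pos l).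
  rewrite (Rpower_Om_eq a 1 (Om l) Ha HOml), Rpower_1 by apply eta_at_pos.
  fold (eta_at l).
  assert (E : eta_at l = mass_at l / (radius_at l * q_of (Q l))).
  { rewrite q_of_Q_at. field. repeat split; lra. }
  rewrite E. unfold q_of. field. repeat split; lra.
Qed.

Lemma is_lim_C (Rad M : R) : Rad <> 0 ->
  is_lim radius_at p_infty Rad -> is_lim mass_at p_infty M ->
  is_lim (fun l => Rpower (Om l) (1 / a) / (1 - Q l)) p_infty (M / Rad).
Proof.
  intros HRad Hr Hm.
  apply (is_lim_ext (fun l => Rpower (1 - Om l) (1 / a) * (mass_at l / (radius_at l * Q l)))).
  { intro l. symmetry. apply Om_pow_div_1_sub_Q. }
  replace (M / Rad) with (1 * (M / (Rad * 1))) by (field; exact HRad).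
  apply is_lim_mult'; [exact (is_lim_Rpower_1_sub Om _ Om_lim)|].
  apply is_lim_div'; [rewrite Rmult_1_r; exact HRad|exact Hm|exact (is_lim_mult' _ _ _ _ _ Hr Q_lim)].
Qed.

Variables (rhom n0 a0 : R).
Hypothesis rhom_pos : 0 < rhom.
Hypothesis a0_pos : 0 < a0.
Hypothesis polytropic : asympt_polytropic rho rhom n0 a0.
Hypothesis n0_pos : 0 < n0.

Lemma is_lim_rho_div_Rpower_eta_at :
  is_lim (fun l => rho (eta_at l) / Rpower (eta_at l) n0) p_infty rhom.
Proof. exact (asympt_polytropic_is_lim rho rhom n0 a0 eta_at rhom_pos a0_pos polytropic
                eta_at_pos is_lim_eta_at). Qed.

Lemma U_le_Rpower_eta_at (Rad : R) : is_lim radius_at p_infty Rad ->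
  exists K0 L0, forall l, L0 <= l -> U l <= K0 * Rpower (eta_at l) n0.
Proof.
  intro Hr.
  destruct (eventually_lt_of_lim _ rhom (2 * rhom) is_lim_rho_div_Rpower_eta_at) as [L0 HL0];
    [lra|].
  exists (8 * PI * Rad ^ 3 * rhom / mass_at L0), L0. intros l Hl.
  destruct (UQ_interior l) as [[? ?] _].
  pose proof (radius_at_pos l). pose proof (mass_at_pos L0). pose proof PI_RGT_0.
  specialize (HL0 l Hl).
  set (P := Rpower (eta_at l) n0) in *. assert (0 < P) by apply exp_pos.
  assert (Hrho : rho (eta_at l) <= 2 * rhom * P).
  { replace (rho (eta_at l)) with (rho (eta_at l) / P * P) by (field; lra). nra. }
  assert (Hrl : radius_at l <= Rad)
    by exact (Rlt_le _ _ (r_lt_Rad U Q radius_at Rad UQ_interior radius_at_pos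
                            is_derive_radius_at Hr l)).
  assert (Hml : mass_at L0 <= mass_at l)
    by exact (m_nondecr U Q mass_at UQ_interior mass_at_pos is_derive_mass_at L0 l Hl).
  assert (HU_le : U l <= u_of (U l)).
  { unfold u_of. apply (Rmult_le_reg_r (1 - U l)); [lra|]. field_simplify; nra. }
  rewrite u_of_U_at in HU_le.
  pose proof (rho_pos _ (eta_at_pos l)). pose proof (mass_at_pos l).
  assert (radius_at l ^ 3 <= Rad ^ 3) by (apply pow_incr; lra).
  assert (0 <= radius_at l ^ 3) by (apply pow_le; lra).
  apply (Rle_trans _ _ _ HU_le).
  replace (8 * PI * Rad ^ 3 * rhom / mass_at L0 * P)
    with (4 * PI * Rad ^ 3 * (2 * rhom * P) * / mass_at L0) by (field; lra).
  apply Rmult_le_compat.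
  - apply Rmult_le_pos; [apply Rmult_le_pos|]; lra.
  - left. apply Rinv_0_lt_compat. lra.
  - apply Rmult_le_compat; [apply Rmult_le_pos; lra|lra|apply Rmult_le_compat_l; lra|exact Hrho].
  - apply Rinv_le_contravar; lra.
Qed.

Lemma Om_pow_div_U l :
  Rpower (Om l) (n0 / a) / U l
  = Rpower (1 - Om l) (n0 / a) * (mass_at l / ((1 - U l) * (4 * PI * radius_at l ^ 3)))
    / (rho (eta_at l) / Rpower (eta_at l) n0).
Proof.
  destruct (interior l) as [[? ?] [_ HOml]].
  pose proof (radius_at_pos l). pose proof (mass_at_pos l). pose proof PI_RGT_0.
  pose proof (rho_pos _ (eta_at_pos l)).
  assert (0 < Rpower (eta_at l) n0) by apply exp_pos.
  assert (0 < radius_at l ^ 3) by (apply pow_lt; lra).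
  rewrite (Rpower_Om_eq a n0 (Om l) Ha HOml). fold (eta_at l).
  assert (E : U l = (1 - U l) * u_of (U l)) by (unfold u_of; field; lra).
  rewrite E at 1. rewrite u_of_U_at. field. repeat split; lra.
Qed.

Lemma is_lim_D (Rad M : R) : 0 < Rad ->
  is_lim radius_at p_infty Rad -> is_lim mass_at p_infty M ->
  is_lim (fun l => Rpower (Om l) (n0 / a) / U l) p_infty (M / (4 * PI * Rad ^ 3 * rhom)).
Proof.
  intros HRad Hr Hm. pose proof PI_RGT_0.
  assert (0 < Rad ^ 3) by (apply pow_lt; lra).
  apply (is_lim_ext _ _ _ _ (fun l => eq_sym (Om_pow_div_U l))).
  replace (M / (4 * PI * Rad ^ 3 * rhom))
    with (1 * (M / ((1 - 0) * (4 * PI * Rad ^ 3))) / rhom) by (field; lra).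
  apply is_lim_div'; [lra| |exact is_lim_rho_div_Rpower_eta_at].
  apply is_lim_mult'; [exact (is_lim_Rpower_1_sub Om _ Om_lim)|].
  apply is_lim_div'; [nra|exact Hm|].
  apply is_lim_mult'; [exact (is_lim_minus' _ _ _ _ _ (is_lim_const 1 p_infty) U_lim)|].
  apply is_lim_mult'; [apply is_lim_const|].
  exact (is_lim_mult' _ _ _ _ _ Hr (is_lim_mult' _ _ _ _ _ Hr (is_lim_mult' _ _ _ _ _ Hr (is_lim_const 1 p_infty)))).
Qed.

Lemma radius_lim_pos (Rad : R) : is_lim radius_at p_infty Rad -> 0 < Rad.
Proof. exact (Rad_pos U Q radius_at Rad UQ_interior radius_at_pos is_derive_radius_at). Qed.

Lemma mass_lim_pos (M : R) : is_lim mass_at p_infty M -> 0 < M.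
Proof. exact (M_pos U Q mass_at M UQ_interior mass_at_pos is_derive_mass_at). Qed.

Lemma surface_expansion (Rad M : R) :
  is_lim radius_at p_infty Rad -> is_lim mass_at p_infty M ->
  exists K lam0, forall l, lam0 <= l ->
    Rabs (eta_at l - M / Rad * depth radius_at Rad l - M / Rad * depth radius_at Rad l ^ 2)
      <= K * Rpower (depth radius_at Rad l) (2 + Rmin 1 n0).
Proof.
  intros Hr Hm. destruct (U_le_Rpower_eta_at Rad Hr) as [K0 [L0 HUb]].
  exact (eta_expansion_le U Q eta_at radius_at mass_at Rad M UQ_interior radius_at_pos
           mass_at_pos eta_at_pos is_derive_eta_at is_derive_radius_at is_derive_mass_at
           q_of_Q_at Hr Hm is_lim_eta_at n0 K0 L0 n0_pos HUb U_lim).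
Qed.

End Orbit.

Theorem mainTheorem12
  (rho : R -> R) (rhom n0 a0 a : R)
  (Hn0 : 0 < n0) (Hrhom : 0 < rhom) (Ha0 : 0 < a0) (Ha : 0 < a)
  (Hrho_pos : forall eta, 0 < eta -> 0 < rho eta)
  (Hrho_diff : forall eta, 0 < eta -> ex_derive rho eta)
  (Hpoly : asympt_polytropic rho rhom n0 a0)
  (U Q Om : R -> R)
  (Hinterior : forall l, (0 < U l < 1) /\ (0 < Q l < 1) /\ (0 < Om l < 1))
  (HU : forall l, is_derive U l
          (U l * (1 - U l) * ((1 - Q l) * (3 - 4 * U l)
                              - n_Om rho a (Om l) * Q l * (1 - U l))))
  (HQ : forall l, is_derive Q l
          (Q l * (1 - Q l) * ((2 * U l - 1) * (1 - Q l) + Q l * (1 - U l))))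
  (HOm : forall l, is_derive Om l
          (- a * Om l * (1 - Om l) * Q l * (1 - U l)))
  (Hconv : is_lim U p_infty 0 /\ is_lim Q p_infty 1 /\ is_lim Om p_infty 0) :
  exists C D Rad M : R,
    0 < C /\ 0 < D /\
    is_lim (fun l => Rpower (Om l) (1 / a) / (1 - Q l)) p_infty C /\
    is_lim (fun l => Rpower (Om l) (n0 / a) / U l) p_infty D /\
    is_lim (fun l => radius_of rho a (U l) (Q l) (Om l)) p_infty Rad /\
    is_lim (fun l => mass_of rho a (U l) (Q l) (Om l)) p_infty M /\
    Rad ^ 2 = 1 / (4 * PI * rhom) * (C / D) /\
    M ^ 2 = 1 / (4 * PI * rhom) * (C ^ 3 / D) /\
    forall vS : R,
      exists K lam0 : R, forall l, lam0 <= l ->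
        let dr := (Rad - radius_of rho a (U l) (Q l) (Om l)) / Rad in
        Rabs (potential_of vS a (Om l) - (- C * dr - C * dr ^ 2 + vS))
          <= K * Rpower dr (2 + Rmin 1 n0).
Proof.
  destruct Hconv as [HUlim [HQlim HOmlim]].
  destruct (ex_lim_radius_at rho a U Q Om) as [Rad HRad]; auto.
  destruct (ex_lim_mass_at rho a U Q Om) as [M HM]; auto.
  assert (HRad_pos : 0 < Rad) by (apply (radius_lim_pos rho a U Q Om); auto).
  assert (HM_pos : 0 < M) by (apply (mass_lim_pos rho a U Q Om); auto).
  destruct (surface_expansion rho a U Q Om) with (rhom := rhom) (n0 := n0) (a0 := a0)
    (Rad := Rad) (M := M) as [K [lam0 Hexp]]; auto.
  pose proof PI_RGT_0.
  assert (0 < 4 * PI * Rad ^ 3 * rhom)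
    by (pose proof (pow_lt Rad 3 HRad_pos); apply Rmult_lt_0_compat; [apply Rmult_lt_0_compat|]; lra).
  exists (M / Rad), (M / (4 * PI * Rad ^ 3 * rhom)), Rad, M.
  repeat split.
  - apply Rdiv_lt_0_compat; lra.
  - apply Rdiv_lt_0_compat; lra.
  - apply (is_lim_C rho a U Q Om); auto. lra.
  - apply (is_lim_D rho a U Q Om) with (a0 := a0); auto.
  - exact HRad.
  - exact HM.
  - field. repeat split; lra.
  - field. repeat split; lra.
  - intro vS. exists K, lam0. intros l Hl.
    specialize (Hexp l Hl). unfold depth, eta_at, radius_at in Hexp.
    eapply Rle_trans; [|exact Hexp]. right.
    unfold potential_of. rewrite Rabs_minus_sym. f_equal. ring.
Qed.
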